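(* Suppose $\mathcal M$ is unichain. For every policy $\pi\subseteq\mathcal S$ and state $s\in\mathcal S$, the function $\lambda\mapsto\alpha^\pi_s(\lambda)$ (activation advantage of $s$ under $\pi$ in $\mathcal M(\lambda)$) is affine, and the absolute value of its slope is at most $2D(P^\pi)+1$.
   Context: Setting. An MDP is $\mathcal M=(\mathcal S,\{0,1\},(P^a)_a,(r^a)_a)$, finite $\mathcal S$, row-stochastic $P^0,P^1$, rewards $r^0,r^1\in\mathbb R^{\mathcal S}$. A policy is a subset $\pi\subseteq\mathcal S$ of states where action 1 is played, inducing $P^\pi$, $r^\pi$; $\mathcal M$ is unichain if every $P^\pi$ has a single recurrent class. For $\lambda\in\mathbb R$, $\mathcal M(\lambda)$ has the same transitions and rewards $r^1-\lambda\mathbf 1$ (action 1), $r^0$ (action 0). For a unichain policy, bias $b^\pi(\lambda)$ (up to additive constant) solves $g^\pi\mathbf 1+b^\pi=r^\pi+P^\pi b^\pi$ in $\mathcal M(\lambda)$; activation advantage $\alpha^\pi_s(\lambda)=r^1_s-\lambda-r^0_s+(P^1_{s,\cdot}-P^0_{s,\cdot})\cdot b^\pi(\lambda)$. Diameter of unichain $P$ with recurrent class $\mathcal S_r$: $D(P)=\max_{s\in\mathcal S,s'\in\mathcal S_r}\mathbb E^P[\tau_{s,s'}]$, $\tau_{s,s'}$ the number of steps to reach $s'$ from $s$. *)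

From HB Require Import structures.
From mathcomp Require Import all_boot all_order all_algebra.
From mathcomp Require Import all_classical all_reals all_analysis.
Set Implicit Arguments. Unset Strict Implicit. Unset Printing Implicit Defensive.
Import Order.TTheory GRing.Theory Num.Theory.
Local Open Scope ring_scope.

Section MDP.
Variables (R : realType) (S : finType).

Definition stochastic (P : S -> S -> R) : Prop :=
  (forall s t, 0 <= P s t) /\ (forall s, \sum_(t : S) P s t = 1).

Definition edge (P : S -> S -> R) : rel S := fun s t => 0 < P s t.
Definition reach (P : S -> S -> R) (s t : S) : bool := connect (edge P) s t.

(* recurrent state of a finite chain: every state reachable from s leads back to s
   (i.e. s lies in a closed communicating class) *)
Definition recurrent (P : S -> S -> R) (s : S) : bool :=
  [forall t, reach P s t ==> reach P t s].

Definition unichain (P : S -> S -> R) : Prop :=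
  forall s t, recurrent P s -> recurrent P t -> reach P s t.

(* policy pi = set of states where action 1 is played *)
Definition Ppol (P0 P1 : S -> S -> R) (pi : {set S}) : S -> S -> R :=
  fun s t => if s \in pi then P1 s t else P0 s t.

Definition rpol (r0 r1 : S -> R) (pi : {set S}) (lam : R) : S -> R :=
  fun s => if s \in pi then r1 s - lam else r0 s.

Definition unichain_mdp (P0 P1 : S -> S -> R) : Prop :=
  forall pi : {set S}, unichain (Ppol P0 P1 pi).

(* surv P s' n x = Pr_x(tau_{x,s'} > n) = Pr_x(X_0, ..., X_n all differ from s') *)
Fixpoint surv (P : S -> S -> R) (s' : S) (n : nat) (x : S) : R :=
  match n with
  | 0 => if x == s' then 0 else 1
  | n.+1 => if x == s' then 0 else \sum_(y : S) P x y * surv P s' n y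
  end.

(* E[tau_{s,s'}] = sum_{n >= 0} Pr(tau > n), in the extended reals *)
Definition hit_time (P : S -> S -> R) (s s' : S) : \bar R :=
  (\sum_(0 <= n <oo) (surv P s' n s)%:E)%E.

Definition diameter (P : S -> S -> R) : \bar R :=
  (\big[maxe/0%E]_(s : S) \big[maxe/0%E]_(s' : S | recurrent P s') hit_time P s s')%E.

Definition is_bias (P0 P1 : S -> S -> R) (r0 r1 : S -> R) (pi : {set S})
  (lam : R) (b : S -> R) : Prop :=
  exists g : R, forall s,
    g + b s = rpol r0 r1 pi lam s + \sum_(t : S) Ppol P0 P1 pi s t * b t.

Definition advantage (P0 P1 : S -> S -> R) (r0 r1 : S -> R) (s : S)
  (lam : R) (b : S -> R) : R :=
  r1 s - lam - r0 s + \sum_(t : S) (P1 s t - P0 s t) * b t.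

End MDP.

From HB Require Import structures.
From mathcomp Require Import all_boot all_order all_algebra.
From mathcomp Require Import all_classical all_reals all_analysis.
From mathcomp Require Import ring lra.
Import Order.TTheory GRing.Theory Num.Theory.
Local Open Scope ring_scope.
Set Implicit Arguments. Unset Strict Implicit.

(* For a unichain policy the Poisson equation g + b = r + P b determines the bias up
   to an additive constant: the difference of two solutions with the same reward is
   harmonic, and a harmonic function attains its maximum and its minimum on the single
   recurrent class, hence is constant.  As the reward of M(lam) is affine in lam, so is
   the bias up to a constant, and therefore the advantage, with slope
   -1 + (P1_s - P0_s) . h where h = b(1) - b(0).  The gap h solves a Poisson equation
   whose reward lies in [-1, 0]; a first-passage argument then gives
   |h x - h s'| <= E[tau_(x,s')] for every s'.  Choosing s' recurrent and subtracting
   h s' (which the difference of two probability rows does not see), each of the two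
   averages is bounded by D(P^pi). *)

Lemma bounded_sums_small_term (R : realType) (a : nat -> R) (m e : R) :
  (forall N, \sum_(0 <= k < N) a k <= m) -> 0 < e -> exists n, a n <= e.
Proof.
move=> sum_le e_gt0; apply: contrapT => /forallNP big_terms.
have a_gt n : e < a n by rewrite ltNge; apply/negP; exact: big_terms.
pose N := (Num.truncn (m / e)).+1.
have : N%:R * e <= m.
  rewrite mulr_natl -[N in e *+ N]subn0 -sumr_const_nat.
  by apply: le_trans (sum_le N); apply: ler_sum => k _; exact/ltW.
have : m / e < N%:R := truncnS_gt _.
rewrite ltr_pdivrMr // => ? ?; lra.
Qed.

Section FiniteChain.
Variables (R : realType) (S : finType).
Implicit Types (P : S -> S -> R) (d u : S -> R).

Lemma exists_argmax d (x0 : S) : exists x, forall y, d y <= d x.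
Proof. by case: (@arg_maxP _ _ _ x0 xpredT d isT) => x _ max_x; exists x => y; exact: max_x. Qed.

(* A state reachable from x with a minimal set of reachable states is recurrent. *)
Lemma reach_recurrent P x : exists2 y, reach P x y & recurrent P y.
Proof.
pose A := [pred y | reach P x y].
have Ax : x \in A by rewrite inE /reach connect0.
case: (@arg_minnP _ x A (fun y => #|[set z | reach P y z]|) Ax) => y xy min_y.
exists y => //; apply/forallP => t; apply/implyP => yt.
have sub : [set z | reach P t z] \subset [set z | reach P y z].
  by apply/fintype.subsetP => z; rewrite !inE; exact: connect_trans yt.
have /eqP eq_reach : [set z | reach P t z] == [set z | reach P y z].
  by rewrite eqEcard sub min_y // inE; exact: connect_trans xy yt.
have : y \in [set z | reach P y z] by rewrite inE /reach connect0.
by rewrite -eq_reach inE.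
Qed.

Definition harmonic P d := forall x, \sum_t P x t * d t = d x.

(* [is_bias P0 P1 r0 r1 pi lam b] unfolds to
   [exists g, poisson (Ppol P0 P1 pi) (rpol r0 r1 pi lam) g b]. *)
Definition poisson P (r : S -> R) (g : R) (h : S -> R) :=
  forall x, g + h x = r x + \sum_t P x t * h t.

Variable P : S -> S -> R.
Hypothesis hP : stochastic P.

Lemma kernel_sum_le d m x : (forall y, d y <= m) -> \sum_t P x t * d t <= m.
Proof.
move=> d_le; rewrite -[leRHS]mul1r -(hP.2 x) mulr_suml.
by apply: ler_sum => t _; apply: ler_wpM2l; [exact: hP.1|].
Qed.

Lemma kernel_sum_ge d m x : (forall y, m <= d y) -> m <= \sum_t P x t * d t.
Proof.
move=> d_ge; rewrite -[leLHS]mul1r -(hP.2 x) mulr_suml.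
by apply: ler_sum => t _; apply: ler_wpM2l; [exact: hP.1|].
Qed.

Lemma kernel_sum_norm_le u m x : (forall y, `|u y| <= m) -> `|\sum_t P x t * u t| <= m.
Proof.
move=> u_le; apply: le_trans (ler_norm_sum _ _ _) _.
under eq_bigr do rewrite normrM (ger0_norm (hP.1 _ _)).
exact: kernel_sum_le.
Qed.

Lemma kernel_sum_shift d c x : \sum_t P x t * (d t + c) = \sum_t P x t * d t + c.
Proof.
by rewrite -[c in RHS]mul1r -(hP.2 x) mulr_suml -big_split; apply: eq_bigr => t _; rewrite mulrDr.
Qed.

Lemma kernel_mean_max_edge d x t : (forall y, d y <= d x) ->
  \sum_t P x t * d t = d x -> edge P x t -> d t = d x.
Proof.
move=> max_x mean_x Pxt.
have gap0 : \sum_t P x t * (d x - d t) = 0.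
  under eq_bigr do rewrite mulrBr.
  by rewrite sumrB -mulr_suml hP.2 mul1r mean_x subrr.
have gap_ge0 i : true -> 0 <= P x i * (d x - d i).
  by move=> _; rewrite mulr_ge0 ?subr_ge0 //; exact: hP.1.
have /eqP := @psumr_eq0P _ _ _ _ gap_ge0 gap0 t isT.
by rewrite mulf_eq0 gt_eqF //= subr_eq0 => /eqP.
Qed.

Lemma harmonic_max_reach d x y : harmonic P d -> (forall z, d z <= d x) ->
  reach P x y -> d y = d x.
Proof.
move=> harm_d max_x /connectP [p]; elim: p x max_x => [|z p IH] x max_x /=.
  by move=> _ ->.
move=> /andP [xz zp] y_last.
have dz : d z = d x := kernel_mean_max_edge max_x (harm_d x) xz.
by rewrite (IH z _ zp y_last) // dz.
Qed.

Lemma harmonicN d : harmonic P d -> harmonic P (fun x => - d x).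
Proof. by move=> harm_d x; under eq_bigr do rewrite mulrN; rewrite sumrN harm_d. Qed.

(* The extrema of d both propagate to the (unique) recurrent class. *)
Lemma harmonic_const d : unichain P -> harmonic P d -> forall x y, d x = d y.
Proof.
move=> uni harm_d x0.
have [xM max_xM] := exists_argmax d x0.
have [xm min_xm] := exists_argmax (fun z => - d z) x0.
have [r _ rec_r] := reach_recurrent P x0.
have reach_r x : reach P x r.
  by have [y xy rec_y] := reach_recurrent P x; exact: connect_trans xy (uni _ _ rec_y rec_r).
have dM := harmonic_max_reach harm_d max_xM (reach_r xM).
have dm := harmonic_max_reach (harmonicN harm_d) min_xm (reach_r xm).
suff d_eq z : d z = d xM by move=> y; rewrite !d_eq.
by apply/eqP; rewrite eq_le max_xM /=; have := min_xm z; lra.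
Qed.

Lemma poisson_gain_bounds r g h (x0 : S) a b : poisson P r g h ->
  (forall x, a <= r x <= b) -> a <= g <= b.
Proof.
move=> Eh r_bounds.
have [xM max_xM] := exists_argmax h x0.
have [xm min_xm] := exists_argmax (fun z => - h z) x0.
have min_xm' y : h xm <= h y by have := min_xm y; lra.
have g_le : g <= b.
  have /andP [_ r_le] := r_bounds xM.
  by have := kernel_sum_le xM max_xM; have := Eh xM; lra.
have g_ge : a <= g.
  have /andP [r_ge _] := r_bounds xm.
  by have := kernel_sum_ge xm min_xm'; have := Eh xm; lra.
by rewrite g_ge g_le.
Qed.

Lemma poisson_comb (a c : R) r r' g g' h h' :
  poisson P r g h -> poisson P r' g' h' ->
  poisson P (fun x => a * r x + c * r' x) (a * g + c * g') (fun x => a * h x + c * h' x).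
Proof.
move=> Eh Eh' x.
have -> : \sum_t P x t * (a * h t + c * h' t) =
          a * \sum_t P x t * h t + c * \sum_t P x t * h' t.
  by rewrite !mulr_sumr -big_split; apply: eq_bigr => t _ /=; ring.
transitivity (a * (g + h x) + c * (g' + h' x)); first ring.
by rewrite Eh Eh'; ring.
Qed.

Lemma poisson_const r g h : unichain P -> poisson P r g h ->
  (forall x, r x = 0) -> forall x y, h x = h y.
Proof.
move=> uni Eh r0 x; apply: harmonic_const => // z.
have r_bounds y : 0 <= r y <= 0 by rewrite r0 lexx.
have /andP [g_ge0 g_le0] := poisson_gain_bounds z Eh r_bounds.
have := Eh z; rewrite r0; lra.
Qed.

Lemma surv_ge0 s' n x : 0 <= surv P s' n x.
Proof.
elim: n x => [|n IH] x /=; case: eqP => // _.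
by apply: sumr_ge0 => y _; apply: mulr_ge0; [exact: hP.1|].
Qed.

Lemma hit_time_ge0 x s' : (0 <= hit_time P x s')%E.
Proof. by apply: nneseries_ge0 => k _ _; rewrite lee_fin surv_ge0. Qed.

(* The term [M * surv P s' n x] accounts for the paths that have not hit [s'] by time
   [n]; when the hitting time is finite it becomes small for some [n]. *)
Lemma le_hit_time x s' (c M : R) : 0 <= M ->
  (forall n, c <= \sum_(0 <= k < n) surv P s' k x + M * surv P s' n x) ->
  (c%:E <= hit_time P x s')%E.
Proof.
move=> M_ge0 c_le.
case E: (hit_time P x s') (hit_time_ge0 x s') => [m| |] ge0;
  [rewrite lee_fin | exact: leey | by rewrite leeNy_eq in ge0].
have sums_le N : \sum_(0 <= k < N) surv P s' k x <= m.
  rewrite -lee_fin -sumEFin -E.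
  by apply: nneseries_lim_ge => k _ _; rewrite lee_fin surv_ge0.
apply/ler_addgt0Pr => e e_gt0.
have M1_gt0 : 0 < M + 1 by lra.
have [n surv_n] := bounded_sums_small_term sums_le (divr_gt0 e_gt0 M1_gt0).
have : M * surv P s' n x <= M * (e / (M + 1)) by exact: ler_wpM2l.
have : M * (e / (M + 1)) <= e by rewrite mulrA ler_pdivrMr //; nra.
have := c_le n; have := sums_le n; lra.
Qed.

Lemma hit_time_bound u s' : u s' = 0 ->
  (forall x, x != s' -> `|u x - \sum_t P x t * u t| <= 1) ->
  forall x, (`|u x|%:E <= hit_time P x s')%E.
Proof.
move=> u_s' step.
have [xa max_xa] := exists_argmax (fun z => `|u z|) s'.
suff claim n x : `|u x| <= \sum_(0 <= k < n) surv P s' k x + `|u xa| * surv P s' n x.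
  by move=> x; apply: le_hit_time (normr_ge0 (u xa)) _ => n; exact: claim.
elim: n x => [|n IH] x.
  rewrite big_geq //= add0r; case: eqP => [->|_]; first by rewrite u_s' normr0 mulr0.
  by rewrite mulr1; exact: max_xa.
have [->|nx] := eqVneq x s'.
  rewrite u_s' normr0 addr_ge0 ?mulr_ge0 ?surv_ge0 ?normr_ge0 //.
  by apply: sumr_ge0 => k _; exact: surv_ge0.
have -> : \sum_(0 <= k < n.+1) surv P s' k x + `|u xa| * surv P s' n.+1 x =
    1 + \sum_t P x t * (\sum_(0 <= k < n) surv P s' k t + `|u xa| * surv P s' n t).
  rewrite big_nat_recl //= (negbTE nx) -addrA; congr (_ + _).
  rewrite exchange_big mulr_sumr -big_split; apply: eq_bigr => t _ /=.
  by rewrite mulrDr mulr_sumr mulrCA.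
have := ler_normD (u x - \sum_t P x t * u t) (\sum_t P x t * u t); rewrite subrK.
move/le_trans; apply; apply: lerD; first exact: step.
apply: le_trans (ler_norm_sum _ _ _) _; apply: ler_sum => t _.
by rewrite normrM ger0_norm; [apply: ler_wpM2l; [exact: hP.1 | exact: IH] | exact: hP.1].
Qed.

Lemma poisson_hit_time_bound r g h a : poisson P r g h ->
  (forall x, a <= r x <= a + 1) ->
  forall x s', (`|h x - h s'|%:E <= hit_time P x s')%E.
Proof.
move=> Eh r_bounds x s'.
have /andP [g_ge g_le] := poisson_gain_bounds x Eh r_bounds.
apply: (@hit_time_bound (fun y => h y - h s')) => [|y _]; first exact: subrr.
rewrite kernel_sum_shift ler_norml; have /andP [r_ge r_le] := r_bounds y.
by have E := Eh y; apply/andP; split; lra.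
Qed.

Lemma hit_time_le_diameter x s' : recurrent P s' -> (hit_time P x s' <= diameter P)%E.
Proof.
by move=> rec_s'; apply: le_trans (le_bigmax _ _ x); exact: le_bigmax_cond.
Qed.

End FiniteChain.

Section Policy.
Variables (R : realType) (S : finType) (P0 P1 : S -> S -> R) (r0 r1 : S -> R).
Hypotheses (hP0 : stochastic P0) (hP1 : stochastic P1).

Lemma stochastic_Ppol pi : stochastic (Ppol P0 P1 pi).
Proof.
split=> [x t|x]; rewrite /Ppol; case: (x \in pi).
- exact: hP1.1.
- exact: hP0.1.
- exact: hP1.2.
- exact: hP0.2.
Qed.

Lemma rpol_affine pi lam x : rpol r0 r1 pi lam x =
  rpol r0 r1 pi 0 x + lam * (rpol r0 r1 pi 1 x - rpol r0 r1 pi 0 x).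
Proof. by rewrite /rpol; case: ifP => _; ring. Qed.

Lemma bias_affine pi b : unichain (Ppol P0 P1 pi) ->
  (forall lam, is_bias P0 P1 r0 r1 pi lam (b lam)) ->
  exists c : R -> R, forall lam t, b lam t = b 0 t + lam * (b 1 t - b 0 t) + c lam.
Proof.
move=> uni hb.
case: (pickP (@predT S)) => [t0 _|S0]; last by exists (fun=> 0) => lam t; have := S0 t.
exists (fun lam => b lam t0 - (b 0 t0 + lam * (b 1 t0 - b 0 t0))) => lam t.
have [g0 E0] := hb 0; have [g1 E1] := hb 1; have [gl El] := hb lam.
have Ed := poisson_comb 1 (-1) El (poisson_comb 1 lam E0 (poisson_comb 1 (-1) E1 E0)).
have r_zero x : 1 * rpol r0 r1 pi lam x +
    -1 * (1 * rpol r0 r1 pi 0 x + lam * (1 * rpol r0 r1 pi 1 x + -1 * rpol r0 r1 pi 0 x)) = 0.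
  by rewrite (rpol_affine pi lam x); ring.
have /= d_eq := poisson_const (stochastic_Ppol pi) uni Ed r_zero t t0.
transitivity (b 0 t + lam * (b 1 t - b 0 t) +
  (1 * b lam t + -1 * (1 * b 0 t + lam * (1 * b 1 t + -1 * b 0 t)))); first ring.
by rewrite d_eq; ring.
Qed.

Lemma bias_gap_hit_time_bound pi b0 b1 :
  is_bias P0 P1 r0 r1 pi 0 b0 -> is_bias P0 P1 r0 r1 pi 1 b1 ->
  forall x s', (`|(b1 x - b0 x) - (b1 s' - b0 s')|%:E <= hit_time (Ppol P0 P1 pi) x s')%E.
Proof.
move=> [g0 E0] [g1 E1] x s'.
have r_bounds y : -1 <= 1 * rpol r0 r1 pi 1 y + -1 * rpol r0 r1 pi 0 y <= -1 + 1.
  by rewrite /rpol; case: ifP => _; apply/andP; split; lra.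
have := poisson_hit_time_bound (stochastic_Ppol pi) (poisson_comb 1 (-1) E1 E0) r_bounds x s'.
by rewrite !mul1r !mulN1r.
Qed.

Lemma sum_kernel_diff s (u : S -> R) :
  \sum_t (P1 s t - P0 s t) * u t = \sum_t P1 s t * u t - \sum_t P0 s t * u t.
Proof. by rewrite -sumrB; apply: eq_bigr => t _; rewrite mulrBl. Qed.

Lemma kernel_diff_sum_shift s (u : S -> R) c :
  \sum_t (P1 s t - P0 s t) * (u t + c) = \sum_t (P1 s t - P0 s t) * u t.
Proof. by rewrite !sum_kernel_diff !kernel_sum_shift //; ring. Qed.

Lemma advantage_affine s b (c : R -> R) :
  (forall lam t, b lam t = b 0 t + lam * (b 1 t - b 0 t) + c lam) ->
  forall lam, advantage P0 P1 r0 r1 s lam (b lam) =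
    (r1 s - r0 s + \sum_t (P1 s t - P0 s t) * b 0 t) +
    (-1 + \sum_t (P1 s t - P0 s t) * (b 1 t - b 0 t)) * lam.
Proof.
move=> bE lam; rewrite /advantage; under eq_bigr do rewrite bE.
rewrite (kernel_diff_sum_shift s (fun t => b 0 t + lam * (b 1 t - b 0 t))).
have -> : \sum_t (P1 s t - P0 s t) * (b 0 t + lam * (b 1 t - b 0 t)) =
    \sum_t (P1 s t - P0 s t) * b 0 t + lam * \sum_t (P1 s t - P0 s t) * (b 1 t - b 0 t).
  by rewrite mulr_sumr -big_split; apply: eq_bigr => t _ /=; ring.
ring.
Qed.

Lemma slope_le_diameter (D : \bar R) (u : S -> R) s : (forall t, `|u t|%:E <= D)%E ->
  (`|-1 + \sum_t (P1 s t - P0 s t) * u t|%:E <= 2%:E * D + 1%:E)%E.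
Proof.
case: D => [d| |] u_le; last by have := u_le s; rewrite leeNy_eq.
  have u_le' t : `|u t| <= d by rewrite -lee_fin.
  have := kernel_sum_norm_le hP1 s u_le'; have := kernel_sum_norm_le hP0 s u_le'.
  rewrite -EFinM -EFinD lee_fin sum_kernel_diff.
  have := ler_normD (-1) (\sum_t P1 s t * u t - \sum_t P0 s t * u t).
  have := ler_normB (\sum_t P1 s t * u t) (\sum_t P0 s t * u t).
  rewrite normrN normr1; lra.
by rewrite gt0_muley ?lte_fin // addye // leey.
Qed.

End Policy.

Theorem mainTheorem8 (R : realType) (S : finType)
  (P0 P1 : S -> S -> R) (r0 r1 : S -> R) :
  stochastic P0 -> stochastic P1 -> unichain_mdp P0 P1 ->
  forall (pi : {set S}) (s : S) (b : R -> S -> R),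
    (forall lam : R, is_bias P0 P1 r0 r1 pi lam (b lam)) ->
    exists c0 c1 : R,
      (forall lam : R, advantage P0 P1 r0 r1 s lam (b lam) = c0 + c1 * lam) /\
      (`|c1|%:E <= 2%:E * diameter (Ppol P0 P1 pi) + 1%:E)%E.
Proof.
move=> hP0 hP1 uni_mdp pi s b hb.
have [c bE] := bias_affine hP0 hP1 (uni_mdp pi) hb.
pose h t := b 1 t - b 0 t.
exists (r1 s - r0 s + \sum_t (P1 s t - P0 s t) * b 0 t).
exists (-1 + \sum_t (P1 s t - P0 s t) * h t).
split; first exact: advantage_affine.
have [s' _ rec_s'] := reach_recurrent (Ppol P0 P1 pi) s.
have -> : \sum_t (P1 s t - P0 s t) * h t = \sum_t (P1 s t - P0 s t) * (h t - h s').
  by rewrite -[RHS](kernel_diff_sum_shift hP0 hP1 s _ (h s')); apply: eq_bigr => t _; rewrite subrK.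
apply: (slope_le_diameter hP0 hP1 s) => t.
apply: le_trans (hit_time_le_diameter t rec_s').
exact: bias_gap_hit_time_bound.
Qed.
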